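(* Assume in addition that $\mathbb{X}_f$ contains an open neighborhood of the origin and that $\mathbb{X}$ is compact. Suppose there is a class $\mathcal{K}_\infty$ function $\alpha$ such that, for every $N\in\{0,1,\ldots,M\}$, $V^0_N(x)\le\alpha(|x|)$ for all $x\in\mathbb{X}_f$. Then there is a class $\mathcal{K}_\infty$ function $\beta$ such that $V(x)\le\beta(|x|)$ for all $x\in\mathbb{X}$.
   Context: Consider the discrete-time controlled system $x^+=f(x,u)$ with state $x\in\mathbb{R}^{n}$ and control $u\in\mathbb{R}^{m}$, constraint sets $\mathbb{X}\subset\mathbb{R}^n$, $\mathbb{U}\subset\mathbb{R}^m$, $\mathbb{Y}\subset\mathbb{R}^p$, and a constraint function $h(x,u)\in\mathbb{R}^p$. A control $u$ is feasible at $x\in\mathbb{X}$ if $u\in\mathbb{U}$, $f(x,u)\in\mathbb{X}$ and $h(x,u)\in\mathbb{Y}$. A control sequence $(u(0),\ldots,u(N-1))$ is feasible from $x$ if, for the state sequence defined by $x(0)=x$ and $x(k+1)=f(x(k),u(k))$, each $u(k)$ is feasible at $x(k)$. We are given a stage cost $l(x,u)$, a terminal set $\mathbb{X}_f$ and a terminal cost $V_f$ defined on $\mathbb{X}_f$. Horizon-$N$ problem at $x$: minimize $\sum_{k=0}^{N-1}l(x(k),u(k))+V_f(x(N))$ over control sequences that are feasible from $x$ and satisfy $x(N)\in\mathbb{X}_f$. Let $V_N^0(x)$ be its minimum value, which is assumed to be attained whenever the feasible set is nonempty. For $N=0$, $V_0^0(x)=V_f(x)$ for $x\in\mathbb{X}_f$.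 Standing assumptions: (A1) $f,l,h,V_f$ are continuous on an open set containing $\mathbb{X}\times\mathbb{U}$ (for $V_f$, an open set containing $\mathbb{X}_f$). The stage cost $l$ is nonnegative definite in $(x,u)$ and positive definite in $u$. $V_f$ is positive definite on $\mathbb{X}_f$. Moreover $f(0,0)=0$, $l(0,0)=0$ and $V_f(0)=0$. (A2) $\mathbb{X}$ and $\mathbb{X}_f$ are closed, $\mathbb{X}_f\subset\mathbb{X}$, $\mathbb{U}$ is compact, and $\mathbb{X},\mathbb{X}_f,\mathbb{U}$ each contain a neighborhood of the origin. (A3) For every $x\in\mathbb{X}_f$ there is a control $u$ feasible at $x$ with $f(x,u)\in\mathbb{X}_f$ and $l(x,u)+V_f(f(x,u))\le V_f(x)$. (A4) For every $x\in\mathbb{X}$ there exist an integer $N\ge0$ and a feasible control sequence of length $N$ from $x$ whose state sequence satisfies $x(N)\in\mathbb{X}_f$. For $x\in\mathbb{X}$, $N(x)$ denotes the minimum such $N$. (A5) There is an integer $M\ge 0$ with $N(x)\le M$ for all $x\in\mathbb{X}$. (A6) There are class $\mathcal{K}_\infty$ functions $\alpha_1,\alpha_2$ with $l(x,u)\ge\alpha_1(|x|)$ for all $x\in\mathbb{X}$, $u\in\mathbb{U}$, and $V_f(x)\le\alpha_2(|x|)$ for all $x\in\mathbb{X}_f$. Define $V(x)=V^0_{N(x)}(x)$ for $x\in\mathbb{X}$. *)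

From HB Require Import structures.
From mathcomp Require Import all_boot all_order all_algebra.
From mathcomp Require Import all_classical all_reals all_analysis.
Set Implicit Arguments. Unset Strict Implicit. Unset Printing Implicit Defensive.
Import Order.TTheory GRing.Theory Num.Theory.
Import numFieldNormedType.Exports.
Local Open Scope classical_set_scope.
Local Open Scope ring_scope.

Section MPC.
Variables (R : realType) (n m p : nat).
Notation X_t := 'rV[R]_n.
Notation U_t := 'rV[R]_m.
Notation Y_t := 'rV[R]_p.

Definition classKinf (a : R -> R) : Prop :=
  a 0 = 0 /\
  {within `[0, +oo[, continuous a} /\
  {in `[0, +oo[ &, forall r s, r < s -> a r < a s} /\
  (forall B : R, exists r : R, 0 <= r /\ B < a r).

Variables (f : X_t -> U_t -> X_t) (h : X_t -> U_t -> Y_t)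
  (l : X_t -> U_t -> R) (Vf : X_t -> R)
  (X Xf : set X_t) (U : set U_t) (Y : set Y_t).

Definition feasible_ctrl (x : X_t) (u : U_t) : Prop :=
  U u /\ X (f x u) /\ Y (h x u).

Fixpoint traj (x : X_t) (us : nat -> U_t) (k : nat) : X_t :=
  match k with
  | 0 => x
  | k'.+1 => f (traj x us k') (us k')
  end.

(* control sequence (u(0),...,u(N-1)) (values of us beyond N-1 are irrelevant) *)
Definition feasible_seq (N : nat) (x : X_t) (us : nat -> U_t) : Prop :=
  forall k, (k < N)%N -> feasible_ctrl (traj x us k) (us k).

Definition admissible (N : nat) (x : X_t) (us : nat -> U_t) : Prop :=
  feasible_seq N x us /\ Xf (traj x us N).

Definition cost (N : nat) (x : X_t) (us : nat -> U_t) : R :=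
  \sum_(k < N) l (traj x us k) (us k) + Vf (traj x us N).

(* optimal value V_N^0(x) (the minimum, when attained, is the infimum) *)
Definition VN0 (N : nat) (x : X_t) : R :=
  inf [set cost N x us | us in admissible N x].

Definition min_attained : Prop :=
  forall N x, (exists us, admissible N x us) ->
    exists2 us, admissible N x us &
      forall vs, admissible N x vs -> cost N x us <= cost N x vs.

(* N(x): the least N for which an admissible sequence exists (0 if none) *)
Definition Nmin (x : X_t) : nat :=
  match pselect (exists N, (fun N => `[< exists us, admissible N x us >]) N) with
  | left pf => ex_minn pf
  | right _ => 0%N
  end.

Definition Vfun (x : X_t) : R := VN0 (Nmin x) x.

Definition A1 : Prop :=
  (exists O : set (X_t * U_t), open O /\ X `*` U `<=` O /\
     forall q, O q ->
       {for q, continuous (fun r : X_t * U_t => f r.1 r.2)} /\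
       {for q, continuous (fun r : X_t * U_t => h r.1 r.2)} /\
       {for q, continuous (fun r : X_t * U_t => l r.1 r.2)}) /\
  (exists O : set X_t, open O /\ Xf `<=` O /\
     forall x, O x -> {for x, continuous Vf}) /\
  (forall x u, X x -> U u -> 0 <= l x u) /\
  (forall x u, X x -> U u -> u != 0 -> 0 < l x u) /\
  (forall x, Xf x -> x != 0 -> 0 < Vf x) /\
  f 0 0 = 0 /\ l 0 0 = 0 /\ Vf 0 = 0.

Definition A2 : Prop :=
  closed X /\ closed Xf /\ Xf `<=` X /\ compact U /\
  nbhs (0 : X_t) X /\ nbhs (0 : X_t) Xf /\ nbhs (0 : U_t) U.

Definition A3 : Prop :=
  forall x, Xf x -> exists u, feasible_ctrl x u /\ Xf (f x u) /\
    l x u + Vf (f x u) <= Vf x.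

Definition A4 : Prop :=
  forall x, X x -> exists N us, admissible N x us.

Definition A5 (M : nat) : Prop :=
  forall x, X x -> (Nmin x <= M)%N.

Definition A6 : Prop :=
  exists a1 a2, classKinf a1 /\ classKinf a2 /\
    (forall x u, X x -> U u -> a1 `|x| <= l x u) /\
    (forall x, Xf x -> Vf x <= a2 `|x|).

End MPC.

From HB Require Import structures.
From mathcomp Require Import all_boot all_order all_algebra.
From mathcomp Require Import all_classical all_reals all_analysis.
Set Implicit Arguments. Unset Strict Implicit. Unset Printing Implicit Defensive.
Import Order.TTheory GRing.Theory Num.Theory.
Import numFieldNormedType.Exports.
Local Open Scope classical_set_scope.
Local Open Scope ring_scope.

(* On the compact set X, V is bounded by a constant B = M * sup l + sup Vf, since
   every N(x) <= M and any admissible sequence of length N(x) bounds V(x).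
   On Xf we have N(x) = 0, so V = V_0^0 <= alpha.  As Xf contains a ball of
   radius r around 0, every x outside Xf has |x| >= r, so there B <= (B / r) |x|;
   hence beta s := alpha s + (B / r) s works. *)

Lemma compact_norm_le {K : realType} {V : normedModType K} {A : set V} :
  compact A -> exists B, 0 <= B /\ forall x, A x -> `|x| <= B.
Proof.
move=> /compact_bounded [M [Mr HM]].
exists (`|M| + 1); split; first by rewrite addr_ge0.
move=> x Ax; apply: (HM (`|M| + 1)) => //.
by rewrite (le_lt_trans (real_ler_norm Mr)) // ltrDl.
Qed.

Lemma continuous_compact_le {R : realType} {T : topologicalType} {g : T -> R}
    {A : set T} :
  {within A, continuous g} -> compact A ->
  exists B, 0 <= B /\ forall x, A x -> g x <= B.
Proof.
move=> cg cA; have [B [B0 gB]] := compact_norm_le (continuous_compact cg cA).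
by exists B; split=> // x Ax; rewrite (le_trans (ler_norm _)) ?gB //; exists x.
Qed.

Lemma nbhs0_norm_ge (R : realType) (V : normedModType R) (A : set V) :
  nbhs (0 : V) A -> exists2 r, 0 < r & forall x, ~ A x -> r <= `|x|.
Proof.
move=> /nbhs_ballP [r r0 Ar]; exists r => // x nAx.
rewrite leNgt; apply/negP => xr; apply: nAx; apply: Ar.
by rewrite -ball_normE /ball_ /= sub0r normrN.
Qed.

Section ClassKinf.
Variables (R : realType) (a : R -> R).
Hypothesis Ka : classKinf a.

Lemma classKinf_le r s : 0 <= r -> r <= s -> a r <= a s.
Proof.
have [_ [_ [a_incr _]]] := Ka; move=> r0 rs.
have [->|rs'] := eqVneq r s; first by [].
apply/ltW/a_incr; rewrite ?in_itv /= ?andbT //; first exact: le_trans rs.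
by rewrite lt_neqAle rs' rs.
Qed.

Lemma classKinf_ge0 s : 0 <= s -> 0 <= a s.
Proof. by have [a0 _] := Ka; move=> s0; rewrite -a0 classKinf_le. Qed.

Lemma classKinfDlinear c : 0 <= c -> classKinf (fun s => a s + c * s).
Proof.
have [a0 [a_cont [a_incr a_unb]]] := Ka; move=> c0.
split; first by rewrite a0 mulr0 addr0.
split.
  have c_cont : {within `[0, +oo[, continuous (fun s : R => c * s)}.
    exact/continuous_subspaceT/mulrl_continuous.
  by move=> x; apply: cvgD; [exact: a_cont | exact: c_cont].
split.
  by move=> s t s0 t0 st; rewrite ltr_leD ?a_incr // ler_wpM2l // ltW.
move=> B; have [s [s0 Bs]] := a_unb B; exists s; split => //.
by rewrite (lt_le_trans Bs) // lerDl mulr_ge0.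
Qed.

End ClassKinf.

Section ValueFunction.
Variables (R : realType) (n m p : nat).
Variables (f : 'rV[R]_n -> 'rV[R]_m -> 'rV[R]_n)
  (h : 'rV[R]_n -> 'rV[R]_m -> 'rV[R]_p) (l : 'rV[R]_n -> 'rV[R]_m -> R)
  (Vf : 'rV[R]_n -> R) (X Xf : set 'rV[R]_n) (U : set 'rV[R]_m)
  (Y : set 'rV[R]_p).

Local Notation traj := (traj f).
Local Notation feasible_seq := (feasible_seq f h X U Y).
Local Notation admissible := (admissible f h X Xf U Y).
Local Notation cost := (cost f l Vf).
Local Notation VN0 := (VN0 f h l Vf X Xf U Y).
Local Notation Nmin := (Nmin f h X Xf U Y).
Local Notation Vfun := (Vfun f h l Vf X Xf U Y).

Lemma Nmin_spec {x} : (exists N us, admissible N x us) ->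
  (exists us, admissible (Nmin x) x us) /\
  (forall N, (exists us, admissible N x us) -> (Nmin x <= N)%N).
Proof.
move=> [N0 adm0]; rewrite /Nmin; case: pselect => [ex|[]]; last first.
  by exists N0; apply/asboolP.
case: ex_minnP => N /asboolP admN N_min; split => // N' admN'.
by apply: N_min; apply/asboolP.
Qed.

Lemma Nmin_Xf x : Xf x -> Nmin x = 0%N.
Proof.
move=> Xfx; have adm0 : exists us, admissible 0 x us by exists (fun=> 0).
have [_ /(_ 0%N adm0)] := Nmin_spec (ex_intro _ 0%N adm0).
by rewrite leqn0 => /eqP.
Qed.

Lemma traj_in_X {x us N k} : X x -> feasible_seq N x us -> (k <= N)%N ->
  X (traj x us k).
Proof.
move=> Xx feas; elim: k => [|k IHk] // kN.
by have [_ [? _]] := feas k kN.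
Qed.

Hypothesis l_ge0 : forall x u, X x -> U u -> 0 <= l x u.
Hypothesis Vf_ge0 : forall x, Xf x -> 0 <= Vf x.

Lemma cost_ge0 {N x us} : X x -> admissible N x us -> 0 <= cost N x us.
Proof.
move=> Xx [feas XfN]; rewrite /cost addr_ge0 ?Vf_ge0 //.
apply: sumr_ge0 => k _; have [Uk _] := feas k (ltn_ord k).
by rewrite l_ge0 //; apply: traj_in_X Xx feas _; exact: ltnW.
Qed.

Lemma VN0_le_cost {N x us} : X x -> admissible N x us -> VN0 N x <= cost N x us.
Proof.
move=> Xx adm; apply: ge_inf; last by exists us.
by exists 0 => _ [vs adm_vs <-]; exact: cost_ge0 Xx adm_vs.
Qed.

Lemma Vfun_le_bound (M : nat) (L K : R) : 0 <= L ->
  (forall x u, X x -> U u -> l x u <= L) -> (forall x, Xf x -> Vf x <= K) ->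
  A4 f h X Xf U Y -> A5 f h X Xf U Y M ->
  forall x, X x -> Vfun x <= M%:R * L + K.
Proof.
move=> L0 lL VfK reach horizon x Xx.
have [[us adm] _] := Nmin_spec (reach x Xx).
have NM := horizon x Xx; rewrite /Vfun.
move: (Nmin x) adm NM => N adm NM.
apply: le_trans (VN0_le_cost Xx adm) _; have [feas XfN] := adm.
rewrite /cost lerD ?VfK //.
apply: (@le_trans _ _ (\sum_(k < N) L)).
  apply: ler_sum => k _; have [Uk _] := feas k (ltn_ord k).
  by rewrite lL //; apply: traj_in_X Xx feas _; exact: ltnW.
by rewrite sumr_const card_ord -[L *+ N]mulr_natl ler_wpM2r // ler_nat.
Qed.

End ValueFunction.

Theorem proposition3 (R : realType) (n m p : nat)
  (f : 'rV[R]_n -> 'rV[R]_m -> 'rV[R]_n) (h : 'rV[R]_n -> 'rV[R]_m -> 'rV[R]_p)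
  (l : 'rV[R]_n -> 'rV[R]_m -> R) (Vf : 'rV[R]_n -> R)
  (X Xf : set 'rV[R]_n) (U : set 'rV[R]_m) (Y : set 'rV[R]_p) (M : nat) :
  A1 f h l Vf X Xf U ->
  A2 X Xf U ->
  A3 f h l Vf X Xf U Y ->
  A4 f h X Xf U Y ->
  A5 f h X Xf U Y M ->
  A6 l Vf X Xf U ->
  min_attained f h l Vf X Xf U Y ->
  (exists O : set 'rV[R]_n, open O /\ O 0 /\ O `<=` Xf) ->
  compact X ->
  (exists alpha : R -> R, classKinf alpha /\
     forall N : nat, (N <= M)%N ->
       forall x, Xf x -> VN0 f h l Vf X Xf U Y N x <= alpha `|x|) ->
  exists beta : R -> R, classKinf beta /\
    forall x, X x -> Vfun f h l Vf X Xf U Y x <= beta `|x|.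
Proof.
move=> [ [Oxu [oOxu [XU_Oxu cont]]] [_ [l_ge0 [_ [Vf_pos [_ [_ Vf0]]]]]]].
move=> [_ [_ [XfX [cU _]]]] _ reach horizon [_ [a2 [_ [Ka2 [_ Vf_a2]]]]] _.
move=> [Ob [oOb [Ob0 ObXf]]] cX [alpha [Ka alpha_bound]].
have Vf_ge0 x : Xf x -> 0 <= Vf x.
  by move=> Xfx; have [->|x0] := eqVneq x 0; [rewrite Vf0 | exact/ltW/Vf_pos].
have l_cont : {within X `*` U, continuous (fun q => l q.1 q.2)}.
  apply: continuous_in_subspaceT => q /set_mem XUq.
  by have [_ [_ ?]] := cont q (XU_Oxu q XUq).
have [L [L0 lL]] := continuous_compact_le l_cont (compact_setX cX cU).
have [KX [KX0 XKX]] := compact_norm_le cX.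
set B := M%:R * L + a2 KX.
have Vfun_B x : X x -> Vfun f h l Vf X Xf U Y x <= B.
  apply: Vfun_le_bound => // [y u Xy Uy | y Xfy]; first exact: (lL (y, u)).
  exact: le_trans (Vf_a2 y Xfy) (classKinf_le Ka2 (normr_ge0 y) (XKX y (XfX y Xfy))).
have B0 : 0 <= B by rewrite addr_ge0 ?mulr_ge0 ?(classKinf_ge0 Ka2).
have [r r0 r_le] := nbhs0_norm_ge (filterS ObXf (open_nbhs_nbhs (conj oOb Ob0))).
exists (fun s => alpha s + B / r * s); split.
  exact: (@classKinfDlinear _ _ Ka (B / r) (divr_ge0 B0 (ltW r0))).
move=> x Xx; have [Xfx|nXfx] := pselect (Xf x).
  rewrite /Vfun Nmin_Xf // (le_trans (alpha_bound 0%N _ x Xfx)) //.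
  by rewrite lerDl mulr_ge0 ?divr_ge0 // ltW.
rewrite (le_trans (Vfun_B x Xx)) // -[leLHS]add0r lerD ?(classKinf_ge0 Ka) //.
by rewrite mulrAC ler_pdivlMr //; exact: (ler_wpM2l B0 (r_le x nXfx)).
Qed.
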